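(* Let $\Lambda,\Delta\in\mathcal T_b$ satisfy $\Delta\cap\Lambda=\emptyset$, $\Delta\cap\Lambda_+=\emptyset$ and $\Lambda_-\cap\Delta_+=\emptyset$, let $\gamma_\Lambda,\gamma_\Delta$ be proper oriented kernels on $\Lambda$ and $\Delta$, and put $\Gamma=\Lambda\cup\Delta$. Then: (i) $\Gamma\in\mathcal T_b$, $\Gamma_+=\Lambda_+\cup(\Delta_+\setminus\Lambda)$ and $\Gamma_-=\Delta_-\cup(\Lambda_-\setminus\Delta)$; (ii) for every $A\in\mathcal F_{S\setminus\Gamma_+}$ the function $\gamma_\Lambda(A,\cdot)$ is $\mathcal F_{S\setminus\Delta_+}$-measurable, so that $\gamma_\Gamma(A,\omega):=\int\gamma_\Lambda(A,\sigma)\,\gamma_\Delta(d\sigma,\omega)$ is well defined, and $\gamma_\Gamma=\gamma_\Delta\gamma_\Lambda$ is a proper oriented kernel on $\Gamma$.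
   Context: $(S,\le)$ is a countable partially ordered set. For $x\in S$ write $x_-=\{y\in S:y<x\}$, $x_+=\{y\in S:y>x\}$. For $\Upsilon\subset S$: $\max(\Upsilon)=\{x\in\Upsilon: y\notin\Upsilon\text{ for all }y>x\}$, $\min(\Upsilon)=\{x\in\Upsilon: y\notin\Upsilon\text{ for all }y<x\}$, the past $\Upsilon_-=\{x\in S\setminus\Upsilon:\exists y\in\Upsilon,\ x<y\}$, the future $\Upsilon_+=\{x\in S\setminus\Upsilon:\exists y\in\Upsilon,\ x>y\}$, and the outer time $\Upsilon^*=\{x\in S: x\text{ is comparable with no }y\in\Upsilon\}$. Standing assumptions: for every $x\in S$, $\max(x_-)$ and $\min(x_+)$ are finite, every $y<x$ satisfies $y\le y_0<x$ for some $y_0\in\max(x_-)$, every $z>x$ satisfies $z\ge z_0>x$ for some $z_0\in\min(x_+)$; and $S$ has no minimal element. A finite set $\Lambda\subset S$ is a time box if $\Lambda_-\cap\Lambda_+=\emptyset$; $\mathcal T_b$ is the set of time boxes. $(E,\mathcal E)$ is a measurable space, $\Omega=E^S$ with product $\sigma$-algebra $\mathcal F$; $\mathcal F_\Upsilon$ is generated by coordinates in $\Upsilon$. A proper oriented kernel on $\Lambda\in\mathcal T_b$ is a map $\gamma_\Lambda:\mathcal F_{S\setminus\Lambda_+}\times\Omega\to[0,1]$ such that (a) $\gamma_\Lambda(\cdot,\omega)$ is a probability measure for each $\omega$; (b) $\gamma_\Lambda(A,\cdot)$ is $\mathcal F_{\Lambda_-\cup\Lambda^*}$-measurable for each $A\in\mathcal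 F_{S\setminus\Lambda_+}$; (c) $\gamma_\Lambda(A,\cdot)$ is $\mathcal F_{\Lambda_-}$-measurable for each $A\in\mathcal F_\Lambda$; (d) $\gamma_\Lambda(B,\omega)=\mathbf 1_B(\omega)$ for all $B\in\mathcal F_{\Lambda_-\cup\Lambda^*}$. *)

From HB Require Import structures.
From mathcomp Require Import all_boot all_order all_algebra.
From mathcomp Require Import all_classical all_reals all_analysis.
From mathcomp Require Import measurable_realfun.
Set Implicit Arguments. Unset Strict Implicit. Unset Printing Implicit Defensive.
Import Order.TTheory GRing.Theory Num.Theory.
Local Open Scope classical_set_scope.
Local Open Scope ring_scope.
Local Open Scope order_scope.

Section Poset.
Context {disp : Order.disp_t} {S : porderType disp}.

Definition below (x : S) : set S := [set y | y < x].
Definition above (x : S) : set S := [set y | x < y].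

Definition setmax (U : set S) : set S :=
  [set x | U x /\ forall y, x < y -> ~ U y].
Definition setmin (U : set S) : set S :=
  [set x | U x /\ forall y, y < x -> ~ U y].

Definition past (U : set S) : set S :=
  [set x | ~ U x /\ exists2 y, U y & x < y].
Definition future (U : set S) : set S :=
  [set x | ~ U x /\ exists2 y, U y & y < x].
Definition outer (U : set S) : set S :=
  [set x | forall y, U y -> ~ (x >=< y)].

Definition standing_assumptions : Prop :=
  countable [set: S] /\
  (forall x : S, finite_set (setmax (below x))) /\
  (forall x : S, finite_set (setmin (above x))) /\
  (forall x y : S, y < x -> exists2 y0, setmax (below x) y0 & y <= y0) /\
  (forall x z : S, x < z -> exists2 z0, setmin (above x) z0 & z0 <= z) /\
  (forall x : S, ~ setmin [set: S] x).

Definition time_box (L : set S) : Prop :=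
  finite_set L /\ past L `&` future L = set0.

End Poset.

Section Config.
Context {disp : Order.disp_t} {S : porderType disp}.
Context {dE : measure_display} {E : measurableType dE}.

Definition Omega := S -> E.

Definition coord_gen (U : set S) : set (set Omega) :=
  [set A | exists x, U x /\ exists2 B : set E, measurable B &
                               A = (fun w : Omega => w x) @^-1` B].

Definition sigmaF (U : set S) : set (set Omega) := <<s coord_gen U >>.

Definition OmegaU (U : set S) := g_sigma_algebraType (coord_gen U).

End Config.

Section Kernel.
Context {disp : Order.disp_t} {S : porderType disp}.
Context {dE : measure_display} {E : measurableType dE}.
Context {R : realType}.

(* a candidate kernel on L: for each omega a probability measure on
   F_{S \ L_+}; condition (a) is built into the type. *)
Definition kernel_type (L : set S) :=
  @Omega _ S _ E -> probability (@OmegaU _ S _ E (~` future L)) R.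

(* conditions (b), (c), (d) of a proper oriented kernel *)
Definition proper_oriented_kernel (L : set S) (g : kernel_type L) : Prop :=
  (forall A : set Omega, sigmaF (~` future L) A ->
     measurable_fun [set: OmegaU (past L `|` outer L)]
       (fun w : OmegaU (past L `|` outer L) => (g w A : \bar R))) /\
  (forall A : set Omega, sigmaF L A ->
     measurable_fun [set: OmegaU (past L)]
       (fun w : OmegaU (past L) => (g w A : \bar R))) /\
  (forall (B : set Omega) (w : Omega), sigmaF (past L `|` outer L) B ->
     g w B = (\1_B w)%:E).

End Kernel.

From HB Require Import structures.
From mathcomp Require Import all_boot all_order all_algebra.
From mathcomp Require Import all_classical all_reals all_analysis.
From mathcomp Require Import measurable_realfun.
Set Implicit Arguments. Unset Strict Implicit. Unset Printing Implicit Defensive.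
Import Order.TTheory GRing.Theory Num.Theory.
Local Open Scope classical_set_scope.
Local Open Scope ereal_scope.

(* For W disjoint from \Lambda_+, every event of F_W is built from events on
   W \cap \Lambda and on W \ \Lambda.  By (d) the kernel \gamma_\Lambda acts on
   the latter as a Dirac mass, and by (c) it sees the former only through
   \Lambda_-; a pi-lambda argument then shows that \gamma_\Lambda(A, .) is
   measurable with respect to the coordinates in \Lambda_- \cup (W \ \Lambda).
   For W = S \ \Gamma_+ these coordinates avoid \Delta_+, so the composition
   \gamma_\Delta \gamma_\Lambda is defined.  The same bound for \gamma_\Delta,
   extended to nonnegative integrands by monotone approximation with simple
   functions, yields (b) and (c) for the composition, and (d) holds because
   both kernels act as the identity on F_{\Gamma_- \cup \Gamma^*}. *)

Section time_sets.
Context {disp : Order.disp_t} {S : porderType disp}.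
Implicit Types U : set S.

Lemma future_setC U : U `<=` ~` future U.
Proof. by move=> x Ux []. Qed.

Lemma setC_future_sub_past_outer U :
  ~` U `&` ~` future U `<=` past U `|` outer U.
Proof.
move=> x [nUx nFx].
have [[y Uy /orP[xy|yx]]|nc] := pselect (exists2 y, U y & (x >=< y)%O).
- move: xy; rewrite le_eqVlt => /predU1P[exy|xy]; first by rewrite exy in nUx.
  by left; split => //; exists y.
- move: yx; rewrite le_eqVlt => /predU1P[eyx|yx]; first by rewrite eyx in Uy.
  by exfalso; apply: nFx; split => //; exists y.
- by right => y Uy cxy; apply: nc; exists y.
Qed.

Lemma past_outer_sub_setC_future U : time_box U ->
  past U `|` outer U `<=` ~` U `&` ~` future U.
Proof.
move=> [_ /disjoints_subset pUfU] x [pUx|oUx]; first by split; [case: pUx|exact: pUfU].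
split; first by move=> Ux; apply: (oUx x Ux); rewrite /Order.comparable lexx.
by move=> [_ [y Uy yx]]; apply: (oUx y Uy); rewrite /Order.comparable (ltW yx) orbT.
Qed.

Variables (L D : set S).
Hypotheses (hL : time_box L) (hD : time_box D) (hDL : D `&` L = set0)
  (hDfL : D `&` future L = set0) (hpLfD : past L `&` future D = set0).

Lemma future_setU : future (L `|` D) = future L `|` (future D `\` L).
Proof.
move/disjoints_subset: hDfL => DnfL.
apply/seteqP; split => x.
  move=> [nLDx [y [Ly|Dy] yx]].
    by left; split; [move=> Lx; apply: nLDx; left|exists y].
  right; split; last by move=> Lx; apply: nLDx; left.
  by split; [move=> Dx; apply: nLDx; right|exists y].
move=> [[nLx [y Ly yx]]|[[nDx [y Dy yx]] nLx]].
  split; last by exists y => //; left.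
  by move=> [//|Dx]; apply: (DnfL x Dx); split => //; exists y.
by split; [move=> []|exists y => //; right].
Qed.

Lemma past_setU : past (L `|` D) = past D `|` (past L `\` D).
Proof.
move/disjoints_subset: hDfL => DnfL; move/disjoints_subset: hDL => DnL.
apply/seteqP; split => x.
  move=> [nLDx [y [Ly|Dy] xy]].
    right; split; last by move=> Dx; apply: nLDx; right.
    by split; [move=> Lx; apply: nLDx; left|exists y].
  by left; split; [move=> Dx; apply: nLDx; right|exists y].
move=> [[nDx [y Dy xy]]|[[nLx [y Ly xy]] nDx]].
  split; last by exists y => //; right.
  by move=> [Lx|//]; apply: (DnfL y Dy); split; [exact: DnL|exists x].
by split; [move=> []|exists y => //; left].
Qed.

Lemma time_box_setU : time_box (L `|` D).
Proof.
split; first by rewrite finite_setU; split; [case: hL|case: hD].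
move/disjoints_subset: hDfL => DnfL; move/disjoints_subset: hDL => DnL.
move/disjoints_subset: hL.2 => pLnfL; move/disjoints_subset: hD.2 => pDnfD.
move/disjoints_subset: hpLfD => pLnfD.
rewrite past_setU future_setU; apply/disjoints_subset => x [pDx|[pLx _]].
- move=> [fLx|[fDx _]]; last exact: pDnfD fDx.
  case: pDx => _ [y Dy xy]; case: fLx => _ [z Lz zx].
  by apply: (DnfL y Dy); split; [exact: DnL|exists z => //; exact: lt_trans xy].
- by move=> [fLx|[fDx _]]; [exact: pLnfL fLx|exact: pLnfD fDx].
Qed.

Lemma setC_future_setUl : ~` future (L `|` D) `<=` ~` future L.
Proof. by move=> x nfx fLx; apply: nfx; rewrite future_setU; left. Qed.

Lemma setC_future_setUr : ~` future (L `|` D) `\` L `<=` ~` future D.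
Proof. by move=> x [nfx nLx] fDx; apply: nfx; rewrite future_setU; right. Qed.

Lemma past_outer_setU : past (L `|` D) `|` outer (L `|` D) `<=`
  (past L `|` outer L) `&` (past D `|` outer D).
Proof.
move=> x /(past_outer_sub_setC_future time_box_setU)[nLDx nfx].
split; apply: setC_future_sub_past_outer; split.
- by move=> Lx; apply: nLDx; left.
- exact: setC_future_setUl.
- by move=> Dx; apply: nLDx; right.
- by apply: setC_future_setUr; split => // Lx; apply: nLDx; left.
Qed.

End time_sets.

Section coordinate_sigma_algebras.
Context {disp : Order.disp_t} {S : porderType disp}.
Context {dE : measure_display} {E : measurableType dE} {R : realType}.
Local Notation Om := (@Omega disp S dE E).
Local Notation OU := (@OmegaU disp S dE E).
Local Notation sigF := (@sigmaF disp S dE E).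
Implicit Types (U V W K : set S) (A B : set Om).

Lemma sigmaFE U A : sigF U A = measurable (A : set (OU U)).
Proof. by []. Qed.

Lemma sigmaFS U V : U `<=` V -> sigF U `<=` sigF V.
Proof.
move=> UV; apply: sub_sigma_algebra2 => A [x [Ux mx]].
by exists x; split => //; exact: UV.
Qed.

Lemma measurable_funS_sigmaF U V (f : Om -> \bar R) : U `<=` V ->
  measurable_fun [set: OU U] f -> measurable_fun [set: OU V] f.
Proof. by move=> UV mf _ B mB; apply: (sigmaFS UV); exact: mf. Qed.

Lemma measurable_indic_sigmaF U A : sigF U A ->
  measurable_fun [set: OU U] (fun w => (\1_A w : R)%:E).
Proof. by move=> mA; apply/measurable_EFinP; exact: (@measurable_indic _ (OU U)). Qed.

(* Dynkin's pi-lambda theorem: F_W is generated by the pi-system of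
   intersections of events of F_(W `&` K) and F_(W `\` K). *)
Lemma sigmaF_ind_setI W K (P : set (set Om)) :
  (forall A1 A2, sigF (W `&` K) A1 -> sigF (W `\` K) A2 -> P (A1 `&` A2)) ->
  (forall A B, A `<=` B -> sigF W A -> sigF W B -> P A -> P B -> P (B `\` A)) ->
  (forall F : (set Om)^nat, nondecreasing_seq F -> (forall n, sigF W (F n)) ->
     (forall n, P (F n)) -> P (\bigcup_n F n)) ->
  forall A, sigF W A -> P A.
Proof.
move=> PI PD PU A mA.
pose G := [set C | exists A1 A2,
  [/\ sigF (W `&` K) A1, sigF (W `\` K) A2 & C = A1 `&` A2]].
have GP : <<s G >> `<=` [set C | sigF W C /\ P C].
  have mWK : sigF (W `&` K) `<=` sigF W by apply: sigmaFS; exact: subIsetl.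
  have mWnK : sigF (W `\` K) `<=` sigF W by apply: sigmaFS; exact: subDsetl.
  apply: lambda_system_subset => //.
  - move=> _ _ [A1 [A2 [m1 m2 ->]]] [B1 [B2 [n1 n2 ->]]].
    exists (A1 `&` B1), (A2 `&` B2); rewrite setIACA; split => //.
      by rewrite sigmaFE; apply: measurableI.
    by rewrite sigmaFE; apply: measurableI.
  - split => //.
    + split; first by rewrite sigmaFE; exact: measurableT.
      by rewrite -(setIT setT); apply: PI; rewrite sigmaFE; exact: measurableT.
    + move=> B C CB [mB PB] [mC PC]; split; last exact: PD.
      by rewrite sigmaFE; apply: measurableD.
    + move=> F ndF mPF; split; last by apply: PU => // n; case: (mPF n).
      by rewrite sigmaFE; apply: bigcup_measurable => n _; case: (mPF n).
  - move=> _ [A1 [A2 [m1 m2 ->]]]; split; last exact: PI.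
    by rewrite sigmaFE; apply: measurableI; [exact: mWK|exact: mWnK].
suff /(_ _ mA) /GP[] : sigF W `<=` <<s G >> by [].
apply: smallest_sub; first exact: smallest_sigma_algebra.
move=> _ [x [Wx [B mB ->]]]; apply: sub_sigma_algebra.
have mx V : V x -> sigF V ((fun w : Om => w x) @^-1` B).
  by move=> Vx; apply: sub_sigma_algebra; exists x; split => //; exists B.
have mT V : sigF V setT by rewrite sigmaFE; exact: measurableT.
have [Kx|nKx] := pselect (K x).
  exists ((fun w : Om => w x) @^-1` B), setT.
  by rewrite setIT; split; [exact: mx|exact: mT|].
exists setT, ((fun w : Om => w x) @^-1` B).
by rewrite setTI; split; [exact: mT|exact: mx|].
Qed.

End coordinate_sigma_algebras.

Section probability_families.
Context {disp : Order.disp_t} {S : porderType disp}.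
Context {dE : measure_display} {E : measurableType dE} {R : realType}.
Local Notation Om := (@Omega disp S dE E).
Local Notation OU := (@OmegaU disp S dE E).
Local Notation sigF := (@sigmaF disp S dE E).
Variable V : set S.
Implicit Types (A B : set Om) (mu : probability (OU V) R).

Lemma probabilityI_indic mu A B (w : Om) : sigF V A -> sigF V B ->
  mu B = (\1_B w : R)%:E -> mu (~` B) = (\1_(~` B) w : R)%:E ->
  mu (A `&` B) = mu A * (\1_B w : R)%:E.
Proof.
rewrite !sigmaFE => mA mB muB muCB.
have [Bw|nBw] := pselect (B w).
  have muAnB : mu (A `\` B) = 0.
    apply: (@subset_measure0 _ _ _ mu _ (~` B)).
    - exact: measurableD.
    - exact: measurableC.
    - by move=> x [].
    - by move: muCB; rewrite indicE memNset.
  have muA : mu A = mu (A `\` B) + mu (A `&` B) := measureDI mu mA mB.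
  by rewrite indicE mem_set // mule1 muA muAnB add0e.
rewrite indicE memNset // mule0.
apply: (@subset_measure0 _ _ _ mu _ B).
- exact: measurableI.
- exact: mB.
- exact: subIsetr.
- by move: muB; rewrite indicE memNset.
Qed.

Lemma probability_setD mu A B : sigF V A -> sigF V B -> A `<=` B ->
  mu (B `\` A) = mu B - mu A.
Proof.
rewrite !sigmaFE => mA mB AB.
rewrite measureD // ?setIidr //.
by rewrite (le_lt_trans (probability_le1 _ mB)) // ltry.
Qed.

Variables (T : set S) (mu_ : Om -> probability (OU V) R).

Lemma measurable_probability_setD A B : sigF V A -> sigF V B -> A `<=` B ->
  measurable_fun [set: OU T] (fun w => mu_ w A) ->
  measurable_fun [set: OU T] (fun w => mu_ w B) ->
  measurable_fun [set: OU T] (fun w => mu_ w (B `\` A)).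
Proof.
move=> mA mB AB mfA mfB.
rewrite (_ : (fun w => _) = (fun w => mu_ w B - mu_ w A)); last first.
  by apply/funext => w; exact: probability_setD.
exact: emeasurable_funB.
Qed.

Lemma measurable_probability_bigcup (F : (set Om)^nat) :
  nondecreasing_seq F -> (forall n, sigF V (F n)) ->
  (forall n, measurable_fun [set: OU T] (fun w => mu_ w (F n))) ->
  measurable_fun [set: OU T] (fun w => mu_ w (\bigcup_n F n)).
Proof.
move=> ndF mF mfF; apply: (emeasurable_fun_cvg _ _ mfF) => w _.
apply: (@nondecreasing_cvg_mu _ _ _ (mu_ w) F mF) => //.
by apply: bigcup_measurable => n _; exact: mF.
Qed.

End probability_families.

Section kernel_measurability.
Import HBNNSimple.
Context {disp : Order.disp_t} {S : porderType disp}.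
Context {dE : measure_display} {E : measurableType dE} {R : realType}.
Local Notation Om := (@Omega disp S dE E).
Local Notation OU := (@OmegaU disp S dE E).
Local Notation sigF := (@sigmaF disp S dE E).
Variables (L : set S) (g : @kernel_type disp S dE E R L).
Hypothesis hg : proper_oriented_kernel g.
Variable W : set S.
Hypothesis WnfL : W `<=` ~` future L.

Let mW : sigF W `<=` sigF (~` future L).
Proof. exact: sigmaFS. Qed.

Lemma measurable_kernel A : sigF W A ->
  measurable_fun [set: OU (past L `|` (W `\` L))] (fun w => g w A).
Proof.
have WLpo : W `\` L `<=` past L `|` outer L.
  by move=> x [Wx nLx]; apply: setC_future_sub_past_outer; split => //; exact: WnfL.
case: hg => _ [gL gLpo]; move: A; apply: (@sigmaF_ind_setI _ _ _ _ _ L).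
- move=> A1 A2 m1 m2.
  rewrite (_ : (fun w => _) = (fun w => g w A1 * (\1_A2 w : R)%:E)); last first.
    apply/funext => w; apply: probabilityI_indic.
    + by apply: mW; apply: sigmaFS m1; exact: subIsetl.
    + by apply: mW; apply: sigmaFS m2; exact: subDsetl.
    + by apply: gLpo; exact: sigmaFS WLpo _ m2.
    + by apply: gLpo; rewrite sigmaFE; apply: measurableC; exact: sigmaFS WLpo _ m2.
  apply: emeasurable_funM.
    apply: (measurable_funS_sigmaF (@subsetUl _ _ _)); apply: gL.
    by apply: sigmaFS m1; exact: subIsetr.
  by apply: (measurable_funS_sigmaF (@subsetUr _ _ _)); exact: measurable_indic_sigmaF.
- by move=> A B AB mA mB; apply: measurable_probability_setD => //; exact: mW.
- by move=> F ndF mF; apply: measurable_probability_bigcup => // n; exact: mW.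
Qed.

Lemma measurable_kernel_integral_nnsfun (h : {nnsfun OU W >-> R}) :
  measurable_fun [set: OU (past L `|` (W `\` L))]
    (fun w => \int[g w]_s (h s)%:E).
Proof.
have mh r : sigF W (h @^-1` [set r]).
  by rewrite sigmaFE -[X in measurable X]setTI; exact: measurable_funP.
have mhL r : measurable_fun [set: OU (~` future L)]
    (fun s => (\1_(h @^-1` [set r]) s : R)%R).
  by apply: (measurable_indic (D := setT)); exact: mW.
rewrite (_ : (fun w => _) = (fun w => \sum_(r \in range h)
    r%:E * g w (h @^-1` [set r]))); last first.
  apply/funext => w; under eq_integral do rewrite fimfunE -fsumEFin //.
  rewrite ge0_integral_fsum //; last 2 first.
  - by move=> r; apply/measurable_EFinP/measurable_funM.
  - by move=> r s _; rewrite nnfun_muleindic_ge0.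
  apply: eq_fsbigr => r _; under eq_integral do rewrite EFinM.
  have [r0|r0] := leP 0%R r.
    rewrite ge0_integralZl // ?integral_indic ?setIT //; first exact: mW.
    exact/measurable_EFinP.
  rewrite preimage_nnfun0 // measure0 mule0 integral0_eq // => s _.
  by rewrite indic0 mule0.
apply: emeasurable_fsum => // r; apply: measurable_funeM.
exact: measurable_kernel.
Qed.

Lemma measurable_kernel_integral (f : Om -> \bar R) : (forall s, 0 <= f s) ->
  measurable_fun [set: OU W] f ->
  measurable_fun [set: OU (past L `|` (W `\` L))] (fun w => \int[g w]_s f s).
Proof.
move=> f0 mf; pose h_ := nnsfun_approx (@measurableT _ (OU W)) mf.
have mh n : measurable_fun [set: OU (~` future L)] (fun s => (h_ n s)%:E).
  apply: (measurable_funS_sigmaF WnfL); apply/measurable_EFinP.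
  exact: measurable_funP.
have ndh : nondecreasing_seq (h_ : (OU W -> R)^nat).
  by move=> m n mn; exact/nd_nnsfun_approx.
rewrite (_ : (fun w => _) =
    (fun w => limn_esup (fun n => \int[g w]_s (h_ n s)%:E))); last first.
  apply/funext => w; rewrite is_cvg_limn_esupE; last first.
    apply: ereal_nondecreasing_is_cvgn => m n mn.
    apply: ge0_le_integral => //; [by move=> s _; rewrite lee_fin..|].
    by move=> s _; rewrite lee_fin; exact/lefP/ndh.
  rewrite -monotone_convergence //.
  - apply: eq_integral => s _; apply/esym/cvg_lim => //.
    exact: cvg_nnsfun_approx.
  - by move=> n s _; rewrite lee_fin.
  - by move=> s _ m n mn; rewrite lee_fin; exact/lefP/ndh.
apply: measurable_fun_limn_esup => n.
exact: measurable_kernel_integral_nnsfun.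
Qed.

End kernel_measurability.

Section mixture.
Context {disp : Order.disp_t} {S : porderType disp}.
Context {dE : measure_display} {E : measurableType dE} {R : realType}.
Local Notation Om := (@Omega disp S dE E).
Local Notation OU := (@OmegaU disp S dE E).
Local Notation sigF := (@sigmaF disp S dE E).
Variables (T U V : set S) (mu : probability (OU V) R).
Variable nu : Om -> probability (OU U) R.

(* The two hypotheses do not enter the value; they are arguments so that the
   probability structure declared below may depend on them. *)
Definition mixture (_ : sigF T `<=` sigF U)
    (_ : forall A, sigF T A -> measurable_fun [set: OU V] (fun s => nu s A))
    (A : set (OU T)) : \bar R :=
  \int[mu]_s nu s A.

Hypothesis TU : sigF T `<=` sigF U.
Hypothesis mnu : forall A, sigF T A -> measurable_fun [set: OU V] (fun s => nu s A).

Let mixture0 : mixture TU mnu set0 = 0.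
Proof.
by rewrite /mixture (eq_integral (cst 0)) ?integral0 // => s _; rewrite measure0.
Qed.

Let mixture_ge0 A : 0 <= mixture TU mnu A.
Proof. exact: integral_ge0. Qed.

Let mixture_sigma_additive : semi_sigma_additive (mixture TU mnu).
Proof.
move=> F mF tF mUF; rewrite [X in _ --> X](_ : _ =
    \int[mu]_s (\sum_(n <oo) nu s (F n))); last first.
  apply: eq_integral => s _; apply/esym/cvg_lim => //.
  apply: measure_semi_sigma_additive => //; last exact: TU.
  by move=> n; apply: TU; exact: mF.
apply/cvg_closeP; split.
  by apply: is_cvg_nneseries => n _ _; exact: integral_ge0.
by rewrite closeE // integral_nneseries // => n; exact: mnu (mF n).
Qed.

HB.instance Definition _ := isMeasure.Build _ _ R (mixture TU mnu)
  mixture0 mixture_ge0 mixture_sigma_additive.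

Let mixture_setT : mixture TU mnu setT = 1.
Proof.
rewrite /mixture (eq_integral (cst 1)) => [|s _]; last exact: probability_setT.
by rewrite integral_cst // mul1e; exact: probability_setT.
Qed.

HB.instance Definition _ :=
  Measure_isProbability.Build _ _ R (mixture TU mnu) mixture_setT.

End mixture.

Section kernel_composition.
Context {disp : Order.disp_t} {S : porderType disp}.
Context {dE : measure_display} {E : measurableType dE} {R : realType}.
Variables (L D : set S) (gL : @kernel_type disp S dE E R L).
Variable gD : @kernel_type disp S dE E R D.
Hypotheses (hgL : proper_oriented_kernel gL) (hgD : proper_oriented_kernel gD).

Lemma measurable_kernel_comp W :
  W `<=` ~` future L -> past L `|` (W `\` L) `<=` ~` future D ->
  forall A, sigmaF W A ->
  measurable_fun [set: OmegaU (past D `|` ((past L `|` (W `\` L)) `\` D))]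
    (fun w => \int[gD w]_s gL s A).
Proof.
move=> WnfL WLnfD A mA; apply: measurable_kernel_integral => //.
exact: measurable_kernel.
Qed.

Lemma kernel_comp_indic (B : set Omega) (w : Omega) : time_box D ->
  sigmaF (past L `|` outer L) B -> sigmaF (past D `|` outer D) B ->
  \int[gD w]_s gL s B = (\1_B w : R)%:E.
Proof.
move=> hD mBL mBD.
rewrite (eq_integral (fun s : OmegaU (~` future D) => (\1_B s : R)%:E)) => [|s _].
  rewrite integral_indic ?setIT //; first exact: hgD.2.2.
  by rewrite -sigmaFE; apply: sigmaFS mBD => x /(past_outer_sub_setC_future hD)[].
exact: hgL.2.2 _ _ mBL.
Qed.

End kernel_composition.

Theorem mainTheorem16
  (disp : Order.disp_t) (S : porderType disp)
  (dE : measure_display) (E : measurableType dE) (R : realType)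
  (hS : @standing_assumptions disp S)
  (L D : set S)
  (hL : time_box L) (hD : time_box D)
  (hDL : D `&` L = set0)
  (hDLf : D `&` future L = set0)
  (hLpDf : past L `&` future D = set0)
  (gL : @kernel_type disp S dE E R L) (gD : @kernel_type disp S dE E R D)
  (hgL : proper_oriented_kernel gL) (hgD : proper_oriented_kernel gD) :
  let G := L `|` D in
  (* (i) *)
  [/\ time_box G,
      future G = future L `|` (future D `\` L) &
      past G = past D `|` (past L `\` D)] /\
  (* (ii) *)
  (forall A : set (@Omega disp S dE E), sigmaF (~` future G) A ->
     measurable_fun [set: OmegaU (~` future D)]
       (fun s : OmegaU (~` future D) => (gL s A : \bar R))) /\
  (exists gG : @kernel_type disp S dE E R G,
     proper_oriented_kernel gG /\
     forall (A : set (@Omega disp S dE E)) (w : @Omega disp S dE E),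
       sigmaF (~` future G) A ->
       gG w A = \int[gD w]_s gL s A).
Proof.
move=> G.
have pG : past G = _ := past_setU hDL hDLf.
split; first by split; [exact: time_box_setU|exact: future_setU|].
have nfGL := setC_future_setUl hDLf.
have nfGD := setC_future_setUr hDLf.
have /disjoints_subset DnfL := hDLf; have /disjoints_subset pLnfD := hLpDf.
have WnfD : past L `|` (~` future G `\` L) `<=` ~` future D by move=> x [/pLnfD|/nfGD].
have hm A : sigmaF (~` future G) A -> measurable_fun [set: OmegaU (~` future D)]
    (fun s => (gL s A : \bar R)).
  by move=> mA; apply: measurable_funS_sigmaF (measurable_kernel hgL nfGL mA).
split => //.
exists (fun w => mixture (gD w) (sigmaFS nfGL) hm); split => //.
split; [|split].
- move=> A mA.
  apply: measurable_funS_sigmaF (measurable_kernel_comp hgL hgD nfGL WnfD mA).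
  move=> x [pDx|[[pLx|[nfGx nLx]] nDx]]; [left; rewrite pG..|].
  + by left.
  + by right.
  by apply: setC_future_sub_past_outer; split => // -[].
- have GnfL : G `<=` ~` future L by move=> x [/future_setC|/DnfL].
  have GnfD : past L `|` (G `\` L) `<=` ~` future D.
    by move=> x [/pLnfD|[[Lx|/future_setC] nLx]].
  move=> A mA.
  apply: measurable_funS_sigmaF (measurable_kernel_comp hgL hgD GnfL GnfD mA).
  by rewrite pG => x [pDx|[[pLx|[[Lx|Dx] nLx]] nDx]]; [left|right|..].
- have poG := past_outer_setU hL hD hDL hDLf hLpDf.
  by move=> B w mB; apply: kernel_comp_indic => //; apply: sigmaFS mB => x /poG[].
Qed.
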